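(* Let $\mu,\nu$ be the Gibbs distributions of two spin systems on the same graph $G=(V,E)$. Then $d_{TV}(\mu,\nu)\ge C\cdot d_{\mathrm{par}}(\mu,\nu)$, where: (1) for two hardcore models both satisfying the uniqueness condition, $C=\frac1{5000}$; (2) for two hardcore models both $b$-marginally bounded ($0<b<1$), $C=b^3$; (3) for two soft-Ising models both $b$-marginally bounded ($0<b<1$), $C=\frac{b^2}{2}$.
   Context: Hardcore model $(G,\lambda)$, $\lambda\in\mathbb{R}_{\ge0}^V$: weight on $\sigma\in\{-1,+1\}^V$ is $\prod_{v:\sigma_v=+1}\lambda_v$ if $\{v:\sigma_v=+1\}$ is independent, else $0$. Soft-Ising model $(G,J,h)$: $J\in\mathbb{R}^{V\times V}$ symmetric, $J_{uv}\ne0$ only for edges, $h\in\mathbb{R}^V$ (finite), weight $\exp(\sum_{\{u,v\}\in E}J_{uv}\sigma_u\sigma_v+\sum_vh_v\sigma_v)$. Gibbs distribution = normalized weight. Uniqueness condition: $\lambda_v\le(1-\eta)\lambda_c(\Delta)$ for all $v$ for some constant $\eta\in(0,1)$, where $\Delta\ge3$ is the maximum degree and $\lambda_c(\Delta)=\frac{(\Delta-1)^{\Delta-1}}{(\Delta-2)^\Delta}$. Parameter distance: for hardcore models, $d_{\mathrm{par}}(\mu,\nu)=\max_v|\lambda^\mu_v-\lambda^\nu_v|$; for soft-Ising models, $d_{\mathrm{par}}(\mu,\nu)=\max\{\max_{u,v}|J^\mu_{uv}-J^\nu_{uv}|,\ \max_v\frac{|h^\mu_v-h^\nu_v|}{\deg_v+1}\}$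 with $\deg_v$ the degree of $v$ in $G$. $b$-marginally bounded: for every $\Lambda\subseteq V$, feasible $\sigma\in\{\pm1\}^\Lambda$, $v\in V$, $c\in\{\pm1\}$, if $\mu^\sigma_v(c)>0$ then $\mu^\sigma_v(c)\ge b$ ($\mu^\sigma_v$ = marginal at $v$ of $\mu$ conditioned on $\sigma$). *)

From HB Require Import structures.
From mathcomp Require Import all_boot all_order all_algebra.
From mathcomp Require Import reals sequences exp.
Set Implicit Arguments. Unset Strict Implicit. Unset Printing Implicit Defensive.
Import Order.TTheory GRing.Theory Num.Theory.
Local Open Scope ring_scope.

Section Defs.
Variable R : realType.
Variable V : finType.

(* Spin configurations sigma in {-1,+1}^V; [true] encodes +1, [false] encodes -1. *)
Definition config := {ffun V -> bool}.
Definition spin (b : bool) : R := if b then 1 else -1.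

Definition simple_graph (e : rel V) : Prop := symmetric e /\ irreflexive e.

Definition deg (e : rel V) (v : V) : nat := #|[set u | e v u]|.
Definition maxdeg (e : rel V) : nat := (\max_(v : V) deg e v)%N.

Definition partition (w : config -> R) : R := \sum_(s : config) w s.
Definition gibbs (w : config -> R) (s : config) : R := w s / partition w.
Definition prob (w : config -> R) (P : pred config) : R :=
  \sum_(s : config | P s) gibbs w s.

Definition dTV (w1 w2 : config -> R) : R :=
  2^-1 * \sum_(s : config) `|gibbs w1 s - gibbs w2 s|.

Definition independent (e : rel V) (s : config) : bool :=
  [forall u, forall v, (s u && s v) ==> ~~ e u v].
Definition hc_weight (e : rel V) (lam : V -> R) (s : config) : R :=
  if independent e s then \prod_(v : V | s v) lam v else 0.
Definition hc_params (lam : V -> R) : Prop := forall v, 0 <= lam v.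

Definition lambda_c (D : nat) : R :=
  ((D.-1)%:R) ^+ (D.-1) / ((D.-2)%:R) ^+ D.

Definition uniqueness (e : rel V) (lam : V -> R) : Prop :=
  (3 <= maxdeg e)%N /\
  exists eta : R, 0 < eta < 1 /\ forall v, lam v <= (1 - eta) * lambda_c (maxdeg e).

Definition dpar_hc (lam1 lam2 : V -> R) : R :=
  \big[Num.max/0]_(v : V) `|lam1 v - lam2 v|.

Definition ising_params (e : rel V) (J : V -> V -> R) : Prop :=
  (forall u v, J u v = J v u) /\ (forall u v, ~~ e u v -> J u v = 0).
(* sum over (unordered) edges {u,v} of J_uv s_u s_v, written as half of the
   sum over ordered adjacent pairs (J is symmetric). *)
Definition ising_weight (e : rel V) (J : V -> V -> R) (h : V -> R) (s : config) : R :=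
  expR (2^-1 * (\sum_(u : V) \sum_(v : V | e u v) J u v * spin (s u) * spin (s v))
        + \sum_(v : V) h v * spin (s v)).

Definition dpar_ising (e : rel V) (J1 J2 : V -> V -> R) (h1 h2 : V -> R) : R :=
  Num.max (\big[Num.max/0]_(u : V) \big[Num.max/0]_(v : V) `|J1 u v - J2 u v|)
          (\big[Num.max/0]_(v : V) (`|h1 v - h2 v| / (deg e v).+1%:R)).

(* configurations agreeing with the partial configuration tau on Lam *)
Definition agrees (Lam : {set V}) (tau : config) : pred config :=
  fun s => [forall v in Lam, s v == tau v].
Definition feasible (w : config -> R) (Lam : {set V}) (tau : config) : Prop :=
  0 < prob w (agrees Lam tau).
Definition cond_marginal (w : config -> R) (Lam : {set V}) (tau : config)
    (v : V) (c : bool) : R :=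
  prob w (fun s => agrees Lam tau s && (s v == c)) / prob w (agrees Lam tau).

Definition marginally_bounded (b : R) (w : config -> R) : Prop :=
  forall (Lam : {set V}) (tau : config) (v : V) (c : bool),
    feasible w Lam tau ->
    0 < cond_marginal w Lam tau v c -> b <= cond_marginal w Lam tau v c.

End Defs.

(* Every parameter can be read off from conditional marginals, and marginals
   move by at most d_TV.  Hardcore: P(v occupied) = lam_v P(Q_v), where Q_v is
   the event that v and its neighbours are unoccupied, so
   |lam1_v - lam2_v| P1(Q_v) <= (1 + lam2_v) d_TV.  It remains to bound P1(Q_v)
   from below: by (1 + L)^-(deg v + 1) when all activities are at most L (and
   (1 + lambda_c(D))^(D+2) <= 5000), and by b^2 under b-marginal boundedness.
   Soft-Ising: for two configurations differing only at v, the log-odds of the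
   pair is twice the local field at v; the pair's conditional marginals lie in
   [b, 1-b], where the logit is (2/b)-Lipschitz, so the expected difference M_v
   of the two local fields is at most 2 d_TV / b.  Flipping a neighbour u
   shifts the local field by 2 J_vu, whence M_v >= 2 b |J1_vu - J2_vu|; and
   M_v >= |h1_v - h2_v| - sum_u |J1_vu - J2_vu| holds already pointwise. *)
From Pilot Require Import Defs.
From HB Require Import structures.
From mathcomp Require Import all_boot all_order all_algebra.
From mathcomp Require Import reals sequences exp.
From mathcomp Require Import ring lra.
Import Order.TTheory GRing.Theory Num.Theory.
Local Open Scope ring_scope.

Set Implicit Arguments. Unset Strict Implicit. Unset Printing Implicit Defensive.

Section RealFacts.
Variable R : realType.

Lemma ler_sum_sub (I : finType) (P Q : pred I) (F G : I -> R) :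
  (forall i, P i -> Q i) -> (forall i, Q i -> 0 <= G i) -> (forall i, P i -> F i <= G i) ->
  \sum_(i | P i) F i <= \sum_(i | Q i) G i.
Proof.
move=> PQ G0 FG; rewrite big_mkcond [X in _ <= X]big_mkcond /=.
apply: ler_sum => i _; case: (boolP (P i)) => Pi; first by rewrite PQ // FG.
by case: ifP => // /G0.
Qed.

Lemma mulr_bigmax_le (I : finType) (F : I -> R) (c x : R) :
  0 <= x -> (forall i, c * F i <= x) -> c * \big[Num.max/0]_i F i <= x.
Proof.
move=> x0 cF; elim/big_ind: _ => //; first by rewrite mulr0.
by move=> y z cy cz; rewrite maxEle; case: ifP.
Qed.

Lemma mulr_max_le (c x y z : R) : c * x <= z -> c * y <= z -> c * Num.max x y <= z.
Proof. by rewrite maxEle; case: ifP. Qed.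

Lemma ln_lipschitz (b y z : R) : 0 < b -> b <= y -> b <= z ->
  `|ln y - ln z| <= `|y - z| / b.
Proof.
move=> b_gt0 hy hz; wlog zy : y z hy hz / z <= y.
  move=> H; case: (leP z y) => [|/ltW]; first exact: H.
  by rewrite distrC [`|y - z|]distrC; apply: H.
have z0 : 0 < z by apply: lt_le_trans hz.
have y0 : 0 < y by apply: lt_le_trans zy.
have ln_ge0 : 0 <= ln (y / z) by apply: ln_ge0; rewrite ler_pdivlMr // mul1r.
rewrite -ln_div ?posrE // ger0_norm // ger0_norm ?subr_ge0 //.
have ln_le : ln (y / z) <= y / z - 1.
  by rewrite -[X in ln X](subrK 1) addrC le_ln1Dx // ltrBrDl subrr divr_gt0.
apply: (le_trans ln_le); have -> : y / z - 1 = (y - z) / z by field; rewrite gt_eqF.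
by rewrite ler_wpM2l ?subr_ge0 // lef_pV2 ?posrE.
Qed.

Lemma logit_lipschitz (b p1 p2 : R) : 0 < b ->
  b <= p1 -> b <= 1 - p1 -> b <= p2 -> b <= 1 - p2 ->
  b * `|ln (p1 / (1 - p1)) - ln (p2 / (1 - p2))| <= 2 * `|p1 - p2|.
Proof.
move=> b_gt0 hp1 hq1 hp2 hq2; have pos x : b <= x -> 0 < x by apply: lt_le_trans.
have lnp := ln_lipschitz b_gt0 hp1 hp2; have lnq := ln_lipschitz b_gt0 hq1 hq2.
have dq : `|(1 - p1) - (1 - p2)| = `|p1 - p2| by rewrite distrC; congr `|_|; ring.
rewrite {}dq in lnq.
rewrite !ln_div ?posrE ?pos // mulrC -ler_pdivlMr //.
have -> : ln p1 - ln (1 - p1) - (ln p2 - ln (1 - p2)) =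
          (ln p1 - ln p2) - (ln (1 - p1) - ln (1 - p2)) by ring.
apply: (le_trans (ler_normB _ _)); rewrite -mulrA mulr2n mulrDl mul1r.
exact: lerD.
Qed.

Lemma mulr_dist_ratio (A1 B1 A2 B2 : R) :
  0 < A1 + B1 -> 0 <= A2 -> 0 <= B2 -> 0 < A2 + B2 ->
  (A1 + B1) * `|B1 / (A1 + B1) - B2 / (A2 + B2)| <= `|B1 - B2| + `|A1 - A2|.
Proof.
move=> S1 A2_ge0 B2_ge0 S2; set p := B2 / (A2 + B2).
have p_ge0 : 0 <= p by rewrite divr_ge0 // ltW.
have p_le1 : p <= 1 by rewrite ler_pdivrMr // mul1r lerDr.
rewrite -{1}(ger0_norm (ltW S1)) -normrM.
have -> : (A1 + B1) * (B1 / (A1 + B1) - p) = (1 - p) * (B1 - B2) - p * (A1 - A2).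
  by rewrite /p; field; rewrite !gt_eqF.
have q_ge0 : 0 <= 1 - p by rewrite subr_ge0.
apply: (le_trans (ler_normB _ _)).
rewrite (normrM (1 - p)) (normrM p) (ger0_norm q_ge0) (ger0_norm p_ge0).
by apply: lerD; rewrite ler_piMl // lerBlDr lerDl.
Qed.

Lemma log_odds_dist_le (b A1 B1 A2 B2 x1 x2 : R) :
  0 < b -> 0 < A1 + B1 -> 0 < A2 + B2 ->
  b * (A1 + B1) <= A1 -> b * (A1 + B1) <= B1 ->
  b * (A2 + B2) <= A2 -> b * (A2 + B2) <= B2 ->
  B1 = expR x1 * A1 -> B2 = expR x2 * A2 ->
  b * (A1 + B1) * `|x1 - x2| <= 2 * (`|B1 - B2| + `|A1 - A2|).
Proof.
move=> b_gt0 S1 S2 bA1 bB1 bA2 bB2 B1E B2E.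
have pos (S X : R) : 0 < S -> b * S <= X -> 0 < X.
  by move=> S_gt0; apply: lt_le_trans; rewrite mulr_gt0.
have [A1_gt0 B1_gt0] := (pos _ _ S1 bA1, pos _ _ S1 bB1).
have [A2_gt0 B2_gt0] := (pos _ _ S2 bA2, pos _ _ S2 bB2).
have odds (A B : R) : 0 < A -> 0 < B -> B / (A + B) / (1 - B / (A + B)) = B / A.
  by move=> A_gt0 B_gt0; field; rewrite !gt_eqF // addr_gt0.
have bp (A B : R) : 0 < A + B -> b * (A + B) <= B -> b <= B / (A + B).
  by move=> S_gt0 bB; rewrite ler_pdivlMr // mulrC.
have bq (A B : R) : 0 < A + B -> b * (A + B) <= A -> b <= 1 - B / (A + B).
  by move=> S_gt0 bA; rewrite -[1](divff (lt0r_neq0 S_gt0)) -mulrBl addrK ler_pdivlMr // mulrC.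
have := logit_lipschitz b_gt0 (bp _ _ S1 bB1) (bq _ _ S1 bA1) (bp _ _ S2 bB2) (bq _ _ S2 bA2).
have lnE (A B x : R) : 0 < A -> B = expR x * A -> ln (B / A) = x.
  by move=> A_gt0 ->; rewrite mulfK ?gt_eqF // expRK.
rewrite !odds // (lnE _ _ _ A1_gt0 B1E) (lnE _ _ _ A2_gt0 B2E) => odds_le.
have ratio_le := mulr_dist_ratio S1 (ltW A2_gt0) (ltW B2_gt0) S2.
rewrite mulrAC; apply: (le_trans (ler_wpM2r (ltW S1) odds_le)).
by rewrite -mulrA ler_wpM2l // mulrC; apply: ratio_le.
Qed.
End RealFacts.

Section Configurations.
Variable V : finType.
Implicit Types (s t : config V) (v x : V) (c : bool).

Definition upd s v c : config V := [ffun x => if x == v then c else s x].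

Definition empty_config : config V := [ffun=> false].

Lemma upd_same s v c : upd s v c v = c.
Proof. by rewrite ffunE eqxx. Qed.

Lemma upd_other s v c x : x != v -> upd s v c x = s x.
Proof. by rewrite ffunE => /negbTE ->. Qed.

Lemma upd_true_sub s v x : s x -> upd s v true x.
Proof. by rewrite ffunE; case: eqP. Qed.

Lemma upd_id s v : upd s v (s v) = s.
Proof. by apply/ffunP => x; rewrite ffunE; case: eqP => // ->. Qed.

Lemma upd_upd s v c c' : upd (upd s v c) v c' = upd s v c'.
Proof. by apply/ffunP => x; rewrite !ffunE; case: eqP. Qed.

Lemma agrees_setC1 s t v c :
  agrees [set~ v] t s && (s v == c) = (s == upd t v c).
Proof.
apply/andP/eqP => [[/forall_inP agr /eqP <-]|->].
  apply/ffunP => x; rewrite ffunE; case: eqP => [->|/eqP xv] //.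
  by apply/eqP/agr; rewrite !inE.
by rewrite upd_same; split => //; apply/forall_inP => x; rewrite !inE => /upd_other ->.
Qed.

Section Sums.
Variable R : realType.

Lemma sum_upd_true (F : config V -> R) (P : pred (config V)) v :
  \sum_(s : config V | s v && P s) F s =
  \sum_(s : config V | ~~ s v && P (upd s v true)) F (upd s v true).
Proof.
pose flip s := upd s v (~~ s v).
have flipK : involutive flip by move=> s; rewrite /flip upd_upd upd_same negbK upd_id.
rewrite (reindex_inj (can_inj flipK)) /flip; apply: eq_big => s.
  by rewrite upd_same; case: (s v).
by rewrite upd_same => /andP[/negbTE ->].
Qed.

Lemma sum_pairs_at (F : config V -> R) v :
  \sum_s F s = \sum_(s : config V | ~~ s v) (F (upd s v false) + F (upd s v true)).
Proof.
rewrite (bigID (fun s : config V => ~~ s v)) /= big_split /=; congr (_ + _).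
  by apply: eq_bigr => s /negbTE sv; rewrite -sv upd_id.
rewrite (eq_bigl (fun s => s v && predT s)) => [|s]; last by rewrite andbT negbK.
by rewrite sum_upd_true; apply: eq_bigl => s; rewrite andbT.
Qed.
End Sums.
End Configurations.

Arguments empty_config {V}.

Section Gibbs.
Variables (R : realType) (V : finType).
Implicit Types (w : config V -> R) (s t : config V) (P : pred (config V)).

Lemma probE w P : prob w P = (\sum_(s | P s) w s) / Defs.partition w.
Proof. by rewrite /prob /gibbs -mulr_suml. Qed.

Lemma prob_agrees_setC1_at w t v c :
  prob w (fun s => agrees [set~ v] t s && (s v == c)) = gibbs w (upd t v c).
Proof. by apply: big_pred1 => s; rewrite agrees_setC1. Qed.

Lemma prob_agrees_setC1 w t v :
  prob w (agrees [set~ v] t) = gibbs w (upd t v false) + gibbs w (upd t v true).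
Proof.
rewrite -!prob_agrees_setC1_at /prob [LHS](bigID (fun s => s v)) addrC /=.
by congr (_ + _); apply: eq_bigl => s; case: (s v); rewrite ?andbT ?andbF.
Qed.

Lemma mul2_dTV w1 w2 : 2 * dTV w1 w2 = \sum_s `|gibbs w1 s - gibbs w2 s|.
Proof. by rewrite /dTV mulrA divff ?mul1r ?pnatr_eq0. Qed.

Lemma dTV_ge0 w1 w2 : 0 <= dTV w1 w2.
Proof. by rewrite /dTV mulr_ge0 ?invr_ge0 // sumr_ge0. Qed.

Lemma dTVC w1 w2 : dTV w1 w2 = dTV w2 w1.
Proof. by rewrite /dTV; congr (_ * _); apply: eq_bigr => s _; rewrite distrC. Qed.

Section Distribution.
Variable w : config V -> R.
Hypothesis w_ge0 : forall s, 0 <= w s.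
Hypothesis partition_gt0 : 0 < Defs.partition w.

Lemma gibbs_ge0 s : 0 <= gibbs w s.
Proof. by rewrite divr_ge0 // ltW. Qed.

Lemma sum_gibbs : \sum_s gibbs w s = 1.
Proof. by rewrite -mulr_suml divff // gt_eqF. Qed.

Lemma gibbs_le_prob P s : P s -> gibbs w s <= prob w P.
Proof.
by move=> Ps; rewrite /prob (bigD1 s) //= lerDl sumr_ge0 // => t _; apply: gibbs_ge0.
Qed.

Lemma ge_expect (f : config V -> R) c :
  (forall s, c <= f s) -> c <= \sum_s gibbs w s * f s.
Proof.
move=> cf; rewrite -[c]mul1r -sum_gibbs mulr_suml.
by apply: ler_sum => s _; apply: ler_wpM2l; [apply: gibbs_ge0 | apply: cf].
Qed.

Lemma marginally_bounded_pair b t v c : marginally_bounded b w ->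
  0 < gibbs w (upd t v c) ->
  b * (gibbs w (upd t v false) + gibbs w (upd t v true)) <= gibbs w (upd t v c).
Proof.
move=> mb gc; have pair_gt0 : 0 < gibbs w (upd t v false) + gibbs w (upd t v true).
  by case: c gc => gc; [apply: ltr_wpDl | apply: ltr_wpDr]; rewrite ?gibbs_ge0.
have := mb [set~ v] t v c; rewrite /feasible /cond_marginal.
rewrite prob_agrees_setC1 prob_agrees_setC1_at ler_pdivlMr // mulrC.
by apply; rewrite // mulr_gt0 ?invr_gt0.
Qed.

Lemma marginally_bounded_marginal b v : marginally_bounded b w ->
  0 < prob w (fun s => s v) -> b <= prob w (fun s => s v).
Proof.
have agrees0 s : agrees set0 empty_config s by apply/forall_inP => x; rewrite inE.
have prob_agrees0 : prob w (agrees set0 empty_config) = 1.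
  by rewrite -sum_gibbs; apply: eq_bigl => s; rewrite agrees0.
have -> : prob w (fun s => s v) = cond_marginal w set0 empty_config v true.
  by rewrite /cond_marginal prob_agrees0 divr1; apply: eq_bigl => s; rewrite agrees0 eqb_id.
by move=> mb p_gt0; apply: mb; rewrite // /feasible prob_agrees0 ltr01.
Qed.
End Distribution.

Lemma prob_dist_le_dTV w1 w2 P :
  (forall s, 0 <= w1 s) -> 0 < Defs.partition w1 ->
  (forall s, 0 <= w2 s) -> 0 < Defs.partition w2 ->
  `|prob w1 P - prob w2 P| <= dTV w1 w2.
Proof.
move=> w1_ge0 Z1 w2_ge0 Z2; pose d s := gibbs w1 s - gibbs w2 s.
have sum_d0 : \sum_s d s = 0 by rewrite sumrB !sum_gibbs // subrr.
have probB : prob w1 P - prob w2 P = \sum_(s | P s) d s by rewrite /prob -sumrB.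
have probBC : prob w1 P - prob w2 P = - \sum_(s | ~~ P s) d s.
  have split_d : \sum_s d s = \sum_(s | P s) d s + \sum_(s | ~~ P s) d s by apply: bigID.
  by apply/eqP; rewrite probB -addr_eq0 -split_d sum_d0.
have le1 : `|\sum_(s | P s) d s| <= \sum_(s | P s) `|d s| by apply: ler_norm_sum.
have le2 : `|\sum_(s | ~~ P s) d s| <= \sum_(s | ~~ P s) `|d s| by apply: ler_norm_sum.
rewrite -probB in le1; rewrite -normrN -probBC in le2.
have := mul2_dTV w1 w2; rewrite (bigID P) /= -/d; lra.
Qed.
End Gibbs.

Section Hardcore.
Variables (R : realType) (V : finType) (e : rel V).
Hypotheses (e_sym : symmetric e) (e_irr : irreflexive e).
Variable lam : V -> R.
Hypothesis lam_ge0 : forall v, 0 <= lam v.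
Implicit Types (s : config V) (v x : V).

Local Notation w := (hc_weight e lam).

Definition nbrs_free s v := [forall u, e v u ==> ~~ s u].

Definition free_on (r : seq V) s := all (fun u => ~~ s u) r.

Definition free_at v s := ~~ s v && nbrs_free s v.

Lemma hc_weight_ge0 s : 0 <= w s.
Proof. by rewrite /hc_weight; case: ifP => // _; apply: prodr_ge0. Qed.

Lemma hc_weight_empty : w empty_config = 1.
Proof.
rewrite /hc_weight ifT; last by apply/forallP => u; apply/forallP => x; rewrite !ffunE.
by rewrite big_pred0 // => x; rewrite ffunE.
Qed.

Lemma hc_partition_gt0 : 0 < Defs.partition w.
Proof.
rewrite /Defs.partition (bigD1 empty_config) //= hc_weight_empty.
by rewrite ltr_wpDr // sumr_ge0 // => s _; apply: hc_weight_ge0.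
Qed.

Lemma independent_upd s v : ~~ s v ->
  independent e (upd s v true) = independent e s && nbrs_free s v.
Proof.
move=> sv; apply/idP/andP => [/forallP ind | [/forallP ind /forallP nf]].
  split; apply/forallP => u.
    apply/forallP => x; apply/implyP => /andP[su sx].
    by have := forallP (ind u) x; rewrite !upd_true_sub.
  apply/implyP => evu; apply/negP => su.
  by have := forallP (ind v) u; rewrite upd_same upd_true_sub //= evu.
apply/forallP => u; apply/forallP => x; rewrite !ffunE.
case: (u =P v) => [->|/eqP uv]; case: (x =P v) => [->|/eqP xv] /=.
- by rewrite e_irr.
- by apply/implyP => sx; apply: contraL (implyP (nf x)) sx.
- by rewrite andbT e_sym; apply/implyP => su; apply: contraL (implyP (nf u)) su.
- exact: (forallP (ind u) x).
Qed.

Lemma hc_weight_upd s v : ~~ s v ->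
  w (upd s v true) = if nbrs_free s v then lam v * w s else 0.
Proof.
move=> sv; rewrite /hc_weight independent_upd //.
case: (independent e s); case: (nbrs_free s v); rewrite ?mulr0 //=.
rewrite (bigD1 v) ?upd_same //=; congr (_ * _); apply: eq_bigl => x.
by rewrite ffunE; case: eqP => [->|_]; rewrite ?(negbTE sv) ?andbT.
Qed.

Lemma hc_weight_upd_le s v : ~~ s v -> w (upd s v true) <= lam v * w s.
Proof.
by move=> sv; rewrite hc_weight_upd //; case: ifP; rewrite // mulr_ge0 ?hc_weight_ge0.
Qed.

Lemma hc_prob_occupied v : prob w (fun s => s v) = lam v * prob w (free_at v).
Proof.
rewrite !probE mulrA; congr (_ / _).
rewrite (eq_bigl (fun s => s v && predT s)) => [|s]; last by rewrite andbT.
rewrite sum_upd_true mulr_sumr /free_at [RHS]big_mkcondr /=.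
apply: eq_big => s; first by rewrite andbT.
by rewrite andbT => sv; rewrite hc_weight_upd.
Qed.

Lemma hc_sum_free_on_cons u r :
  \sum_(s | free_on r s) w s <= (1 + lam u) * \sum_(s | free_on (u :: r) s) w s.
Proof.
rewrite (bigID (fun s => s u)) /= mulrDl mul1r addrC; apply: lerD.
  by rewrite (eq_bigl (free_on (u :: r))) // => s; rewrite andbC.
rewrite (eq_bigl (fun s => s u && free_on r s)) => [|s]; last by rewrite andbC.
rewrite sum_upd_true mulr_sumr; apply: ler_sum_sub.
- move=> s /andP[su fr]; rewrite /= su; apply: sub_all fr => x.
  by apply: contra; apply: upd_true_sub.
- by move=> s _; rewrite mulr_ge0 ?hc_weight_ge0.
- by move=> s /andP[su _]; apply: hc_weight_upd_le.
Qed.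

Lemma hc_partition_le_free_on r :
  Defs.partition w <= (\prod_(x <- r) (1 + lam x)) * \sum_(s | free_on r s) w s.
Proof.
elim: r => [|u r IH]; first by rewrite big_nil mul1r.
apply: (le_trans IH); rewrite big_cons -mulrA [X in _ <= X]mulrC -mulrA ler_wpM2l //.
  by rewrite prodr_ge0 // => x _; rewrite addr_ge0.
by rewrite mulrC hc_sum_free_on_cons.
Qed.

Lemma free_at_free_on v : free_at v =1 free_on (v :: enum [set u | e v u]).
Proof.
move=> s; congr (_ && _); apply/forallP/allP => [nf x | nf x].
  by rewrite mem_enum inE; apply/implyP.
by apply/implyP => evx; apply: nf; rewrite mem_enum inE.
Qed.

Lemma hc_prob_free_at_ge v (L : R) : (forall x, lam x <= L) ->
  ((1 + L) ^+ (deg e v).+1)^-1 <= prob w (free_at v).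
Proof.
move=> lam_le; have L_ge0 : 0 <= L by apply: le_trans (lam_le v).
have pow_gt0 : 0 < (1 + L) ^+ (deg e v).+1 by rewrite exprn_gt0 // ltr_wpDr.
rewrite probE ler_pdivlMr ?hc_partition_gt0 // mulrC ler_pdivrMr //.
rewrite (eq_bigl _ _ (free_at_free_on v)).
apply: (le_trans (hc_partition_le_free_on (v :: enum [set u | e v u]))).
rewrite mulrC ler_wpM2l ?sumr_ge0 //.
  by move=> s _; apply: hc_weight_ge0.
have one_lam_ge0 x : 0 <= 1 + lam x by rewrite addr_ge0.
rewrite big_cons big_enum exprS /deg -prodr_const; apply: ler_pM.
- exact: one_lam_ge0.
- exact: prodr_ge0.
- by rewrite lerD2l.
- by apply: ler_prod => x _; rewrite one_lam_ge0 lerD2l lam_le.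
Qed.

Lemma hc_gibbs_empty_gt0 : 0 < gibbs w empty_config.
Proof. by rewrite /gibbs hc_weight_empty div1r invr_gt0 hc_partition_gt0. Qed.

Lemma nbrs_free_empty v : nbrs_free empty_config v.
Proof. by apply/forallP => u; rewrite ffunE implybT. Qed.

Lemma hc_prob_free_at_gt0 v : 0 < prob w (free_at v).
Proof.
apply: (lt_le_trans hc_gibbs_empty_gt0); apply: gibbs_le_prob.
- exact: hc_weight_ge0.
- exact: hc_partition_gt0.
- by rewrite /free_at nbrs_free_empty ffunE.
Qed.

Lemma hc_marginally_bounded_lam b v : marginally_bounded b w -> b * (1 + lam v) <= 1.
Proof.
move=> mb; have := marginally_bounded_pair hc_weight_ge0 hc_partition_gt0
  (t := empty_config) (v := v) (c := false) mb.
have upd0 : upd empty_config v false = empty_config.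
  by rewrite -(upd_id empty_config v) ffunE upd_upd.
have upd1 : gibbs w (upd empty_config v true) = lam v * gibbs w empty_config.
  by rewrite /gibbs hc_weight_upd ?ffunE // nbrs_free_empty mulrA.
rewrite upd0 upd1 => /(_ hc_gibbs_empty_gt0).
rewrite -{1}[gibbs w empty_config]mul1r -mulrDl mulrA.
by rewrite -{2}[gibbs w empty_config]mul1r ler_pM2r ?hc_gibbs_empty_gt0.
Qed.
End Hardcore.

Section HardcorePair.
Variables (R : realType) (V : finType) (e : rel V).
Hypotheses (e_sym : symmetric e) (e_irr : irreflexive e).
Variables lam1 lam2 : V -> R.
Hypotheses (lam1_ge0 : forall v, 0 <= lam1 v) (lam2_ge0 : forall v, 0 <= lam2 v).

Local Notation w1 := (hc_weight e lam1).
Local Notation w2 := (hc_weight e lam2).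

Lemma hc_lam_dist_le v :
  `|lam1 v - lam2 v| * prob w1 (free_at e v) <= (1 + lam2 v) * dTV w1 w2.
Proof.
have dist_le P := prob_dist_le_dTV P (hc_weight_ge0 e lam1_ge0) (hc_partition_gt0 e lam1_ge0)
  (hc_weight_ge0 e lam2_ge0) (hc_partition_gt0 e lam2_ge0).
have Q_ge0 := ltW (hc_prob_free_at_gt0 e lam1_ge0 v).
rewrite -(ger0_norm Q_ge0) -normrM.
have -> : (lam1 v - lam2 v) * prob w1 (free_at e v) =
    (prob w1 (fun s => s v) - prob w2 (fun s => s v)) +
    lam2 v * (prob w2 (free_at e v) - prob w1 (free_at e v)).
  by rewrite !hc_prob_occupied //; ring.
rewrite mulrDl mul1r; apply: (le_trans (ler_normD _ _)); apply: lerD; first exact: dist_le.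
by rewrite normrM ger0_norm // ler_wpM2l // distrC dist_le.
Qed.

Lemma hc_lam_dist_le_pow v (L : R) : (forall x, lam1 x <= L) -> (forall x, lam2 x <= L) ->
  `|lam1 v - lam2 v| <= (1 + L) ^+ (deg e v).+2 * dTV w1 w2.
Proof.
move=> lam1_le lam2_le; have L_ge0 : 0 <= L by apply: le_trans (lam1_le v).
have pow_gt0 : 0 < (1 + L) ^+ (deg e v).+1 by rewrite exprn_gt0 // ltr_wpDr.
have Q_ge := hc_prob_free_at_ge e_sym e_irr lam1_ge0 v lam1_le.
have key := hc_lam_dist_le v.
have PQ : 1 <= (1 + L) ^+ (deg e v).+1 * prob w1 (free_at e v).
  by rewrite -[X in X <= _](mulfV (lt0r_neq0 pow_gt0)) ler_wpM2l // ltW.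
have key' : `|lam1 v - lam2 v| * prob w1 (free_at e v) <= (1 + L) * dTV w1 w2.
  by apply: (le_trans key); rewrite ler_wpM2r ?dTV_ge0 ?lerD2l ?lam2_le.
apply: (le_trans (ler_peMr (normr_ge0 _) PQ)).
rewrite mulrCA [_ ^+ _.+2]exprS [(1 + L) * _]mulrC -mulrA.
by apply: ler_wpM2l; [apply: ltW | apply: key'].
Qed.

Lemma hc_marginally_bounded_lam_dist b v : 0 < b ->
  marginally_bounded b w1 -> marginally_bounded b w2 -> 0 < lam1 v ->
  b ^+ 3 * `|lam1 v - lam2 v| <= dTV w1 w2.
Proof.
move=> b_gt0 mb1 mb2 lam1_gt0; set Q := prob w1 (free_at e v).
have Q_gt0 : 0 < Q := hc_prob_free_at_gt0 e lam1_ge0 v.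
have occ_ge : b <= lam1 v * Q.
  rewrite -hc_prob_occupied //.
  apply: (marginally_bounded_marginal (hc_partition_gt0 e lam1_ge0) mb1).
  by rewrite hc_prob_occupied // mulr_gt0.
have bl1 := hc_marginally_bounded_lam e_sym e_irr lam1_ge0 v mb1.
have bl2 := hc_marginally_bounded_lam e_sym e_irr lam2_ge0 v mb2.
have Q_ge : b ^+ 2 <= Q by rewrite expr2; nra.
have key := hc_lam_dist_le v.
have N_ge0 := normr_ge0 (lam1 v - lam2 v).
rewrite exprS -mulrA; apply: (le_trans (ler_wpM2l (ltW b_gt0) (ler_wpM2r N_ge0 Q_ge))).
rewrite mulrC (mulrC Q); apply: (le_trans (ler_wpM2r (ltW b_gt0) key)).
by rewrite mulrAC ler_piMl ?dTV_ge0 // mulrC; apply: bl2.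
Qed.
End HardcorePair.

Section LambdaC.
Variable R : realType.

Lemma expr1D_le_expR (x : R) n : 0 <= 1 + x -> (1 + x) ^+ n <= expR (n%:R * x).
Proof. by move=> x_ge; rewrite expRM_natl lerXn2r ?nnegrE ?expR_ge0 // expR_ge1Dx. Qed.

Lemma expR1_le3 : expR (1 : R) <= 3.
Proof.
have sixth_le : expR (6^-1 : R) <= 6 / 5.
  have := expR_ge1Dx (- 6^-1 : R); rewrite expRN => h.
  have x_gt0 := expR_gt0 (6^-1 : R).
  have := ler_wpM2l (ltW x_gt0) h; rewrite mulfV ?gt_eqF //; lra.
have -> : (1 : R) = 6%:R * 6^-1 by rewrite mulfV // pnatr_eq0.
rewrite expRM_natl; apply: (le_trans (lerXn2r _ _ _ sixth_le)); rewrite ?nnegrE ?expR_ge0 //.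
  by rewrite divr_ge0.
by rewrite !exprS expr0; lra.
Qed.

Lemma lambda_c_le (m : nat) : (0 < m)%N ->
  lambda_c R m.+2 <= 3 * ((m.+1)%:R / (m%:R) ^+ 2).
Proof.
move=> m_gt0; rewrite /lambda_c /=; set x : R := m%:R.
have x_gt0 : 0 < x by rewrite ltr0n.
have -> : (m.+1)%:R ^+ m.+1 / x ^+ m.+2 = (1 + x^-1) ^+ m * ((m.+1)%:R / x ^+ 2).
  have -> : 1 + x^-1 = (m.+1)%:R / x by rewrite -natr1 -/x; field; rewrite gt_eqF.
  by rewrite expr_div_n !exprS; field; rewrite expf_neq0 // gt_eqF.
apply: ler_wpM2r; first by rewrite divr_ge0 ?exprn_ge0 ?ltW.
apply: le_trans expR1_le3; apply: (le_trans (expr1D_le_expR _ _)).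
  by rewrite addr_ge0 // invr_ge0 ltW.
by rewrite -/x mulfV ?gt_eqF.
Qed.

Lemma lambda_c_pow_le (D : nat) : (3 <= D)%N -> (1 + lambda_c R D) ^+ D.+2 <= 5000.
Proof.
have [D_le6 D_ge3|] := leqP D 6.
  by case: D D_le6 D_ge3 => [|[|[|[|[|[|[|]]]]]]] // _ _; rewrite /lambda_c /= !exprS !expr0; lra.
case: D => [|[|m]] // m_gt4 _.
have lc_ge0 : 0 <= lambda_c R m.+2 by rewrite divr_ge0 ?exprn_ge0.
apply: (le_trans (expr1D_le_expR _ _)); first by rewrite addr_ge0.
apply: (@le_trans _ _ (expR (7%:R * 1))).
  rewrite ler_expR mulr1; apply: (le_trans (ler_wpM2l (ler0n _ _) (lambda_c_le _))).
    by case: m m_gt4 lc_ge0.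
  set x : R := m%:R; have x_ge5 : 5 <= x by rewrite ler_nat.
  have -> : (m.+4)%:R = x + 4 by rewrite -addn4 natrD.
  have -> : (m.+1)%:R = x + 1 by rewrite -addn1 natrD.
  rewrite !mulrA ler_pdivrMr ?exprn_gt0 ?expr2; nra.
by rewrite expRM_natl (le_trans (lerXn2r _ _ _ expR1_le3)) ?nnegrE ?expR_ge0 // !exprS expr0; lra.
Qed.
End LambdaC.

Section Ising.
Variables (R : realType) (V : finType) (e : rel V).
Hypotheses (e_sym : symmetric e) (e_irr : irreflexive e).
Implicit Types (s : config V) (v u x : V) (J : V -> V -> R) (h : V -> R).

Local Notation spin := (spin R).

Definition pair_energy J s : R :=
  \sum_u \sum_(x | e u x) J u x * spin (s u) * spin (s x).

Definition field_energy h s : R := \sum_v h v * spin (s v).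

Definition local_field J h v s : R := h v + \sum_(u | e v u) J v u * spin (s u).

Lemma field_energy_upd h s v :
  field_energy h (upd s v true) - field_energy h (upd s v false) = 2 * h v.
Proof.
rewrite -sumrB (bigD1 v) //= big1 => [|x xv]; last by rewrite !upd_other // subrr.
by rewrite !upd_same /spin addr0; ring.
Qed.

Lemma spin_upd_mulB s v u x : u != x ->
  spin (upd s v true u) * spin (upd s v true x) - spin (upd s v false u) * spin (upd s v false x)
  = 2 * ((u == v)%:R * spin (s x) + (x == v)%:R * spin (s u)).
Proof.
move=> ux; rewrite !ffunE.
case: (u =P v) => [uv|_]; case: (x =P v) => [xv|_] /=.
- by rewrite uv xv eqxx in ux.
all: rewrite /spin; ring.
Qed.

Lemma sum_edges_at_l (F : V -> V -> R) v :
  \sum_u \sum_(x | e u x) (u == v)%:R * F u x = \sum_(x | e v x) F v x.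
Proof.
rewrite (bigD1 v) //= [X in _ + X]big1 => [|u uv]; last first.
  by apply: big1 => x _; rewrite (negbTE uv) mul0r.
by rewrite addr0; apply: eq_bigr => x _; rewrite eqxx mul1r.
Qed.

Lemma sum_edges_at_r (F : V -> V -> R) v :
  \sum_u \sum_(x | e u x) (x == v)%:R * F u x = \sum_(u | e v u) F u v.
Proof.
rewrite [RHS]big_mkcond; apply: eq_bigr => u _.
rewrite big_mkcond (bigD1 v) //= big1 => [|x /negbTE xv]; last by case: ifP; rewrite ?xv ?mul0r.
by rewrite addr0 eqxx mul1r e_sym.
Qed.

Lemma pair_energy_upd J s v : (forall x y, J x y = J y x) ->
  pair_energy J (upd s v true) - pair_energy J (upd s v false) =
  4 * \sum_(u | e v u) J v u * spin (s u).
Proof.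
move=> J_sym.
have term u x : e u x ->
    J u x * spin (upd s v true u) * spin (upd s v true x) -
    J u x * spin (upd s v false u) * spin (upd s v false x) =
    (u == v)%:R * (2 * J u x * spin (s x)) + (x == v)%:R * (2 * J u x * spin (s u)).
  move=> eux; have ux : u != x by apply: contraTneq eux => ->; rewrite e_irr.
  by rewrite -!mulrA -mulrBr spin_upd_mulB //; ring.
rewrite -sumrB; under eq_bigr => u _ do rewrite -sumrB (eq_bigr _ (term u)) big_split /=.
rewrite big_split /= sum_edges_at_l sum_edges_at_r.
under [X in _ + X]eq_bigr => u _ do rewrite J_sym.
by rewrite -big_split /= mulr_sumr; apply: eq_bigr => u _; ring.
Qed.

Lemma ising_weight_upd J h s v : (forall x y, J x y = J y x) ->
  ising_weight e J h (upd s v true) =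
  expR (2 * local_field J h v s) * ising_weight e J h (upd s v false).
Proof.
move=> J_sym; rewrite /ising_weight -expRD; congr expR.
have := pair_energy_upd s v J_sym; have := field_energy_upd h s v.
rewrite /pair_energy /field_energy /local_field.
set P1 := \sum_u _; set P0 := \sum_u _; set F1 := \sum_x _; set F0 := \sum_x _.
set N := \sum_(u | e v u) _; lra.
Qed.

Lemma ising_weight_gt0 J h s : 0 < ising_weight e J h s.
Proof. exact: expR_gt0. Qed.

Lemma ising_partition_gt0 J h : 0 < Defs.partition (ising_weight e J h).
Proof.
rewrite /Defs.partition (bigD1 empty_config) //= ltr_pwDl ?ising_weight_gt0 //.
by rewrite sumr_ge0 // => s _; rewrite ltW ?ising_weight_gt0.
Qed.

Lemma ising_gibbs_gt0 J h s : 0 < gibbs (ising_weight e J h) s.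
Proof. by rewrite divr_gt0 ?ising_weight_gt0 ?ising_partition_gt0. Qed.

Lemma ising_gibbs_upd J h s v : (forall x y, J x y = J y x) ->
  gibbs (ising_weight e J h) (upd s v true) =
  expR (2 * local_field J h v s) * gibbs (ising_weight e J h) (upd s v false).
Proof. by move=> J_sym; rewrite /gibbs ising_weight_upd // mulrA. Qed.

Lemma local_field_upd_same J h v s c : local_field J h v (upd s v c) = local_field J h v s.
Proof.
congr (_ + _); apply: eq_bigr => u evu; rewrite upd_other //.
by apply: contraTneq evu => ->; rewrite e_irr.
Qed.

Lemma local_field_upd_nbr J h v u s : e v u ->
  local_field J h v (upd s u true) = local_field J h v (upd s u false) + 2 * J v u.
Proof.
move=> evu; rewrite /local_field -addrA; congr (_ + _).
rewrite [LHS](bigD1 u) // [X in _ = X + _](bigD1 u) //= !upd_same.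
under eq_bigr => x /andP[_ xu] do rewrite upd_other //.
under [X in _ = _ + X + _]eq_bigr => x /andP[_ xu] do rewrite upd_other //.
by rewrite /spin; ring.
Qed.

Lemma ising_marginally_bounded_pair J h b s v c :
  marginally_bounded b (ising_weight e J h) ->
  b * (gibbs (ising_weight e J h) (upd s v false) + gibbs (ising_weight e J h) (upd s v true))
  <= gibbs (ising_weight e J h) (upd s v c).
Proof.
move=> mb; apply: (marginally_bounded_pair _ (ising_partition_gt0 J h) mb (ising_gibbs_gt0 _ _ _)).
by move=> t; rewrite ltW ?ising_weight_gt0.
Qed.
End Ising.

Section IsingPair.
Variables (R : realType) (V : finType) (e : rel V).
Hypotheses (e_sym : symmetric e) (e_irr : irreflexive e).
Variables (J1 J2 : V -> V -> R) (h1 h2 : V -> R).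
Hypotheses (J1_sym : forall x y, J1 x y = J1 y x) (J2_sym : forall x y, J2 x y = J2 y x).
Variable b : R.
Hypothesis b_gt0 : 0 < b.

Local Notation w1 := (ising_weight e J1 h1).
Local Notation w2 := (ising_weight e J2 h2).

Hypotheses (mb1 : marginally_bounded b w1) (mb2 : marginally_bounded b w2).

Definition field_gap v s := local_field e J1 h1 v s - local_field e J2 h2 v s.

Definition mean_field_gap v := \sum_s gibbs w1 s * `|field_gap v s|.

Lemma mean_field_gap_le v : b * mean_field_gap v <= 2 * dTV w1 w2.
Proof.
rewrite /mean_field_gap mul2_dTV !(sum_pairs_at _ v) mulr_sumr; apply: ler_sum => s _.
rewrite /field_gap !local_field_upd_same // -mulrDl mulrA.
have pair_gt0 (J : V -> V -> R) (h : V -> R) :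
    0 < gibbs (ising_weight e J h) (upd s v false) + gibbs (ising_weight e J h) (upd s v true).
  by rewrite addr_gt0 ?ising_gibbs_gt0.
have := log_odds_dist_le b_gt0 (pair_gt0 J1 h1) (pair_gt0 J2 h2)
  (ising_marginally_bounded_pair _ _ false mb1) (ising_marginally_bounded_pair _ _ true mb1)
  (ising_marginally_bounded_pair _ _ false mb2) (ising_marginally_bounded_pair _ _ true mb2)
  (ising_gibbs_upd e_sym e_irr h1 s v J1_sym) (ising_gibbs_upd e_sym e_irr h2 s v J2_sym).
rewrite -mulrBr normrM (ger0_norm (ler0n _ 2)) mulrCA ler_pM2l ?ltr0n //.
by move=> /le_trans; apply; rewrite addrC.
Qed.

Lemma mean_field_gap_ge_J v u : e v u -> 2 * b * `|J1 v u - J2 v u| <= mean_field_gap v.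
Proof.
move=> evu; rewrite /mean_field_gap (sum_pairs_at _ u).
have -> : 2 * b * `|J1 v u - J2 v u| = \sum_(s : config V | ~~ s u)
    2 * b * `|J1 v u - J2 v u| * (gibbs w1 (upd s u false) + gibbs w1 (upd s u true)).
  by rewrite -mulr_sumr -sum_pairs_at sum_gibbs ?mulr1 // ising_partition_gt0.
apply: ler_sum => s _.
have -> : field_gap v (upd s u true) = field_gap v (upd s u false) + 2 * (J1 v u - J2 v u).
  by rewrite /field_gap !local_field_upd_nbr //; ring.
have ba := ising_marginally_bounded_pair s u false mb1.
have bc := ising_marginally_bounded_pair s u true mb1.
set a := gibbs w1 (upd s u false) in ba bc *; set c := gibbs w1 (upd s u true) in ba bc *.
set x := field_gap v _; set y := J1 v u - J2 v u.
have k_ge0 : 0 <= b * (a + c) by rewrite mulr_ge0 ?ltW // addr_gt0 ?ising_gibbs_gt0.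
have tri : 2 * `|y| <= `|x + 2 * y| + `|x|.
  have -> : 2 * `|y| = `|(x + 2 * y) - x| by rewrite addrAC subrr add0r normrM ger0_norm.
  exact: ler_normB.
have t1 := ler_wpM2r (normr_ge0 x) ba; have t2 := ler_wpM2r (normr_ge0 (x + 2 * y)) bc.
have -> : 2 * b * `|y| * (a + c) = b * (a + c) * (2 * `|y|) by ring.
apply: (le_trans (ler_wpM2l k_ge0 tri)); rewrite mulrDr [X in _ <= X]addrC.
exact: lerD t2 t1.
Qed.

Lemma mean_field_gap_ge_h v :
  `|h1 v - h2 v| - \sum_(u | e v u) `|J1 v u - J2 v u| <= mean_field_gap v.
Proof.
have w1_ge0 s : 0 <= w1 s by rewrite ltW ?ising_weight_gt0.
apply: (ge_expect w1_ge0 (ising_partition_gt0 e J1 h1)) => s.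
set dJ := \sum_(u | e v u) (J1 v u - J2 v u) * spin R (s u).
have gapE : field_gap v s = (h1 v - h2 v) + dJ.
  by rewrite /field_gap /local_field /dJ (eq_bigr _ (fun u _ => mulrBl _ _ _)) sumrB; ring.
have dJ_le : `|dJ| <= \sum_(u | e v u) `|J1 v u - J2 v u|.
  apply: (le_trans (ler_norm_sum _ _ _)); apply: ler_sum => u _.
  by rewrite normrM; case: (s u); rewrite /spin ?normrN normr1 mulr1.
have : `|h1 v - h2 v| <= `|field_gap v s| + `|dJ|.
  by rewrite gapE -[X in `|X| <= _](addrK dJ) ler_normB.
lra.
Qed.

Lemma ising_J_dist v u : e v u -> b ^+ 2 * `|J1 v u - J2 v u| <= dTV w1 w2.
Proof.
move=> evu; have := le_trans (ler_wpM2l (ltW b_gt0) (mean_field_gap_ge_J evu)) (mean_field_gap_le v).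
by rewrite expr2; nra.
Qed.

Lemma ising_h_dist v : b <= 1 ->
  b ^+ 2 / 2 * (`|h1 v - h2 v| / (deg e v).+1%:R) <= dTV w1 w2.
Proof.
move=> b_le1; set S := \sum_(u | e v u) `|J1 v u - J2 v u|.
set D := dTV w1 w2; have D_ge0 : 0 <= D := dTV_ge0 w1 w2.
have S_le : b ^+ 2 * S <= (deg e v)%:R * D.
  rewrite /S mulr_sumr; apply: (le_trans (ler_sum _ (fun u => @ising_J_dist v u))).
  by rewrite (eq_bigl (mem [set u | e v u])) => [|u]; rewrite ?inE // sumr_const mulr_natl.
have h_le := le_trans (ler_wpM2l (ltW b_gt0) (mean_field_gap_ge_h v)) (mean_field_gap_le v).
have bh_le := ler_wpM2l (ltW b_gt0) h_le; rewrite -/S -/D in bh_le.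
have bD_le : b * D <= D by rewrite ler_piMl.
have -> : (deg e v).+1%:R = (deg e v)%:R + 1 :> R by rewrite -natr1.
have d1_gt0 : 0 < (deg e v)%:R + 1 :> R by rewrite ltr_wpDl.
have -> : b ^+ 2 / 2 * (`|h1 v - h2 v| / ((deg e v)%:R + 1)) =
          b ^+ 2 * `|h1 v - h2 v| / (2 * ((deg e v)%:R + 1)) by field; rewrite gt_eqF.
have dD_ge0 : 0 <= (deg e v)%:R * D by rewrite mulr_ge0.
rewrite ler_pdivrMr ?mulr_gt0 //; rewrite expr2 in S_le *; lra.
Qed.
End IsingPair.

Lemma hardcore_uniqueness_dTV (R : realType) (V : finType) (e : rel V) (lam1 lam2 : V -> R) :
  symmetric e -> irreflexive e -> hc_params lam1 -> hc_params lam2 ->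
  uniqueness e lam1 -> uniqueness e lam2 ->
  5000^-1 * dpar_hc lam1 lam2 <= dTV (hc_weight e lam1) (hc_weight e lam2).
Proof.
move=> e_sym e_irr lam1_ge0 lam2_ge0 [D_ge3 [eta1 [eta1_01 lam1_le]]] [_ [eta2 [eta2_01 lam2_le]]].
set L := lambda_c R (maxdeg e).
have L_ge0 : 0 <= L by rewrite divr_ge0 ?exprn_ge0.
have below_L (eta : R) (lam : V -> R) : 0 < eta < 1 ->
    (forall v, lam v <= (1 - eta) * L) -> forall v, lam v <= L.
  move=> /andP[eta_gt0 _] lam_le v; apply: (le_trans (lam_le v)).
  by rewrite ler_piMl // lerBlDr lerDl ltW.
apply: mulr_bigmax_le; first exact: dTV_ge0.
move=> v; rewrite ler_pdivrMl ?ltr0n //.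
apply: (le_trans (hc_lam_dist_le_pow e_sym e_irr lam1_ge0 lam2_ge0 v
  (below_L _ _ eta1_01 lam1_le) (below_L _ _ eta2_01 lam2_le))).
rewrite ler_wpM2r ?dTV_ge0 //; apply: le_trans (lambda_c_pow_le R D_ge3).
by rewrite ler_weXn2l ?lerDl // ltnS ltnS; apply: leq_bigmax.
Qed.

Lemma hardcore_marginally_bounded_dTV (R : realType) (V : finType) (e : rel V)
    (b : R) (lam1 lam2 : V -> R) :
  symmetric e -> irreflexive e -> 0 < b -> hc_params lam1 -> hc_params lam2 ->
  marginally_bounded b (hc_weight e lam1) -> marginally_bounded b (hc_weight e lam2) ->
  b ^+ 3 * dpar_hc lam1 lam2 <= dTV (hc_weight e lam1) (hc_weight e lam2).
Proof.
move=> e_sym e_irr b_gt0 lam1_ge0 lam2_ge0 mb1 mb2.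
apply: mulr_bigmax_le => [|v]; first exact: dTV_ge0.
have [lam1_gt0|lam1_le0] := ltrP 0 (lam1 v).
  exact: hc_marginally_bounded_lam_dist.
have [lam2_gt0|lam2_le0] := ltrP 0 (lam2 v).
  by rewrite distrC dTVC; apply: hc_marginally_bounded_lam_dist.
have lam_eq0 (lam : V -> R) : hc_params lam -> lam v <= 0 -> lam v = 0.
  by move=> lam_ge0 lam_le0; apply/eqP; rewrite eq_le lam_le0 lam_ge0.
by rewrite (lam_eq0 lam1) // (lam_eq0 lam2) // subrr normr0 mulr0 dTV_ge0.
Qed.

Lemma ising_marginally_bounded_dTV (R : realType) (V : finType) (e : rel V)
    (b : R) (J1 J2 : V -> V -> R) (h1 h2 : V -> R) :
  symmetric e -> irreflexive e -> 0 < b < 1 -> ising_params e J1 -> ising_params e J2 ->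
  marginally_bounded b (ising_weight e J1 h1) -> marginally_bounded b (ising_weight e J2 h2) ->
  b ^+ 2 / 2 * dpar_ising e J1 J2 h1 h2 <= dTV (ising_weight e J1 h1) (ising_weight e J2 h2).
Proof.
move=> e_sym e_irr /andP[b_gt0 b_lt1] [J1_sym J1_0] [J2_sym J2_0] mb1 mb2.
have D_ge0 := dTV_ge0 (ising_weight e J1 h1) (ising_weight e J2 h2).
apply: mulr_max_le; apply: mulr_bigmax_le => // u; last exact: ising_h_dist (ltW b_lt1).
apply: mulr_bigmax_le => // v; have [euv|neuv] := boolP (e u v).
  apply: le_trans (ising_J_dist e_sym e_irr J1_sym J2_sym b_gt0 mb1 mb2 euv).
  by rewrite ler_wpM2r // ler_pdivrMr // ler_peMr ?exprn_ge0 ?ltW // ltr1n.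
by rewrite J1_0 // J2_0 // subrr normr0 mulr0.
Qed.

Unset Implicit Arguments.
Set Strict Implicit.

Theorem lemma2p2 (R : realType) (V : finType) (e : rel V) :
  simple_graph e ->
  (* (1) hardcore models in the uniqueness regime *)
  (forall lam1 lam2 : V -> R,
     hc_params lam1 -> hc_params lam2 ->
     uniqueness e lam1 -> uniqueness e lam2 ->
     dTV (hc_weight e lam1) (hc_weight e lam2) >= 5000^-1 * dpar_hc lam1 lam2) /\
  (* (2) b-marginally bounded hardcore models *)
  (forall (b : R) (lam1 lam2 : V -> R),
     0 < b < 1 ->
     hc_params lam1 -> hc_params lam2 ->
     marginally_bounded b (hc_weight e lam1) ->
     marginally_bounded b (hc_weight e lam2) ->
     dTV (hc_weight e lam1) (hc_weight e lam2) >= b ^+ 3 * dpar_hc lam1 lam2) /\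
  (* (3) b-marginally bounded soft-Ising models *)
  (forall (b : R) (J1 J2 : V -> V -> R) (h1 h2 : V -> R),
     0 < b < 1 ->
     ising_params e J1 -> ising_params e J2 ->
     marginally_bounded b (ising_weight e J1 h1) ->
     marginally_bounded b (ising_weight e J2 h2) ->
     dTV (ising_weight e J1 h1) (ising_weight e J2 h2)
       >= b ^+ 2 / 2 * dpar_ising e J1 J2 h1 h2).
Proof.
move=> [e_sym e_irr]; split; [|split].
- by move=> lam1 lam2; apply: hardcore_uniqueness_dTV.
- by move=> b lam1 lam2 /andP[b_gt0 _]; apply: hardcore_marginally_bounded_dTV.
- by move=> b J1 J2 h1 h2; apply: ising_marginally_bounded_dTV.
Qed.
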